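(* Let $\alpha\in(0,1)$. Consider the repeated game with action sets $\mathcal{A}$, $\mathcal{B}$ and vector payoff $m_{\mathrm{reg}}:\mathcal{A}\times\mathcal{B}\to\mathbb{R}\times\mathbb{R}^{\mathcal{A}}$, $$m_{\mathrm{reg}}(a,b)=\Big(\mathbf{1}_{b\le a},\ \big(\ell_\alpha(a,b)-\ell_\alpha(a',b)\big)_{a'\in\mathcal{A}}\Big),\qquad \ell_\alpha(a,b)=(\alpha-\mathbf{1}_{b\le a})(b-a).$$ Then the closed convex set $S_{\mathrm{reg}}=[0,\alpha]\times(-\infty,0]^{\mathcal{A}}$ is not approachable: there is no strategy of the learner guaranteeing, for every strategy of the opponent, $d\big(\frac1T\sum_{t=1}^T m_{\mathrm{reg}}(a_t,b_t),S_{\mathrm{reg}}\big)\to0$ almost surely.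
   Context: Fix $n\ge1$; $\mathcal{A}=\{k/(n+1):k=0,\dots,n+1\}$ (so $|\mathcal{A}|=n+2$), $\mathcal{B}=\{k/(n+1):k=1,\dots,n+1\}$. Repeated game: at each round $t$ the learner chooses a mixed action on $\mathcal{A}$ and the opponent a mixed action on $\mathcal{B}$, both as functions of the past, and $a_t$, $b_t$ are drawn independently from them given the past. $d$ denotes Euclidean point-to-set distance. *)

From HB Require Import structures.
From mathcomp Require Import all_boot all_order all_algebra.
From mathcomp Require Import all_classical all_reals all_analysis.
Set Implicit Arguments. Unset Strict Implicit. Unset Printing Implicit Defensive.
Import Order.TTheory GRing.Theory Num.Theory.
Import numFieldNormedType.Exports.
Local Open Scope classical_set_scope.
Local Open Scope ring_scope.

Section Game.
Variables (R : realType) (n : nat).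

Definition Aidx := 'I_(n.+2).
Definition Bidx := 'I_(n.+1).

Definition Aval (i : Aidx) : R := (i : nat)%:R / (n.+1)%:R.
Definition Bval (j : Bidx) : R := (j : nat).+1%:R / (n.+1)%:R.

(* Payoff space R x R^A, coordinates indexed by option Aidx:
   None = first coordinate, Some a' = coordinate a'. *)
Definition vec := option Aidx -> R.

Definition eucl_norm (x : vec) : R := Num.sqrt (\sum_(k : option Aidx) x k ^+ 2).

Definition dist (x : vec) (S : set vec) : R :=
  inf [set r | exists s, S s /\ r = eucl_norm (fun k => x k - s k)].

Definition ell (alpha a b : R) : R := (alpha - ((b <= a)%R)%:R) * (b - a).

Definition mreg (alpha : R) (i : Aidx) (j : Bidx) : vec :=
  fun k => match k with
           | None => ((Bval j <= Aval i)%R)%:R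
           | Some a' => ell alpha (Aval i) (Bval j) - ell alpha (Aval a') (Bval j)
           end.

Definition Sreg (alpha : R) : set vec :=
  [set x | 0 <= x None <= alpha /\ forall a' : Aidx, x (Some a') <= 0].

Definition is_mixed (X : finType) (p : X -> R) : Prop :=
  (forall x, 0 <= p x) /\ \sum_(x : X) p x = 1.

Definition history := seq (Aidx * Bidx).

Definition lstrategy := history -> Aidx -> R.
Definition ostrategy := history -> Bidx -> R.

Definition is_lstrategy (s : lstrategy) := forall h, is_mixed (s h).
Definition is_ostrategy (s : ostrategy) := forall h, is_mixed (s h).

Section Play.
Context {d : measure_display} {T : measurableType d}.

Definition hist (a : nat -> T -> Aidx) (b : nat -> T -> Bidx) (t : nat) (w : T)
  : history := [seq (a s w, b s w) | s <- iota 0 t].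

(* (P, a, b) realizes the play of strategies x (learner) and y (opponent):
   the actions are random variables, and given the past history h at round t,
   a_t and b_t are drawn independently from x h and y h. *)
Definition realizes (P : probability T R) (x : lstrategy) (y : ostrategy)
  (a : nat -> T -> Aidx) (b : nat -> T -> Bidx) : Prop :=
  (forall t i, measurable [set w | a t w = i]) /\
  (forall t j, measurable [set w | b t w = j]) /\
  (forall t (h : history) i j,
     P [set w | hist a b t w = h /\ a t w = i /\ b t w = j] =
     (P [set w | hist a b t w = h] * (x h i * y h j)%:E)%E).

(* average payoff over rounds 0..T (i.e. T+1 rounds) *)
Definition avg_payoff (m : Aidx -> Bidx -> vec)
  (a : nat -> T -> Aidx) (b : nat -> T -> Bidx) (N : nat) (w : T) : vec :=
  fun k => (N.+1)%:R^-1 * \sum_(t < N.+1) m (a t w) (b t w) k.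
End Play.

Definition approachable (m : Aidx -> Bidx -> vec) (S : set vec) : Prop :=
  exists x : lstrategy, is_lstrategy x /\
    forall y : ostrategy, is_ostrategy y ->
    forall (d : measure_display) (T : measurableType d) (P : probability T R)
           (a : nat -> T -> Aidx) (b : nat -> T -> Bidx),
      realizes P x y a b ->
      {ae P, forall w, (fun N => dist (avg_payoff m a b N w) S) @ \oo --> (0 : R)}.

End Game.

From HB Require Import structures.
From mathcomp Require Import all_boot all_order all_algebra.
From mathcomp Require Import all_classical all_reals all_analysis.
From mathcomp Require Import ring lra.

(* Against the opponent who always plays [b = 1], the first coordinate of the
   average payoff is the frequency [f] of the action [a = 1], while the regret
   coordinate of [a' = 1] is at least [alpha / (n + 1) * (1 - f)]: every action
   [a < 1] is beaten by [1] by at least that much.  A point of [S_reg] has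
   [f <= alpha] and non-positive regrets, so on every play the average payoff
   stays at distance at least [c > 0] from [S_reg].

   To refute approachability one still needs a probability space on which an
   arbitrary learner strategy plays against this opponent.  It is built on
   [[0, 1[] with the uniform law by inverse-CDF sampling: every history owns a
   subinterval whose length is its probability, split among its one-step
   extensions in proportion to the mixed actions. *)

Set Implicit Arguments.
Unset Strict Implicit.
Unset Printing Implicit Defensive.
Import Order.TTheory GRing.Theory Num.Theory.
Local Open Scope classical_set_scope.
Local Open Scope ring_scope.

Section Cumulative.
Variables (R : realType) (X : finType) (p : X -> R).
Hypothesis p_mixed : is_mixed p.

Definition cum (k : nat) : R := \sum_(u | (enum_rank u < k)%N) p u.

Lemma cum0 : cum 0 = 0.
Proof. by rewrite /cum big_pred0. Qed.

Lemma cum_card : cum #|X| = 1.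
Proof. by rewrite -p_mixed.2; apply: eq_bigl => u; rewrite ltn_ord. Qed.

Lemma cumS (z : X) : cum (enum_rank z).+1 = cum (enum_rank z) + p z.
Proof.
rewrite /cum (bigD1 z) ?ltnSn //= addrC; congr (_ + _); apply: eq_bigl => u.
by rewrite ltnS ltn_neqAle andbC (inj_eq val_inj) (inj_eq enum_rank_inj).
Qed.

Lemma cum_le k k' : (k <= k')%N -> cum k <= cum k'.
Proof.
move=> le_kk'; rewrite /cum !(big_mkcond (fun u => (enum_rank u < _)%N)) /=.
apply: ler_sum => u _; case: ifP => [/leq_trans->//|_].
by case: ifP => // _; exact: p_mixed.1.
Qed.

(* The points [l + s * cum k] cut [[l, l + s[] into one cell per [z], of length [s * p z]. *)
Definition in_part (l s : R) (z : X) (w : R) : bool :=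
  (l + s * cum (enum_rank z) <= w) && (w < l + s * cum (enum_rank z).+1).

Section Partition.
Variables (l s : R).
Hypothesis s_ge0 : 0 <= s.

Lemma cut_le k k' : (k <= k')%N -> l + s * cum k <= l + s * cum k'.
Proof. by move=> le_kk'; rewrite lerD2l ler_wpM2l // cum_le. Qed.

Lemma in_part_sub z w : in_part l s z w -> l <= w < l + s.
Proof.
case/andP=> lo hi; have := cut_le (leq0n (enum_rank z)).
have := cut_le (ltn_ord (enum_rank z)).
by rewrite cum0 (_ : cum #|_| = 1) ?cum_card //; lra.
Qed.

Lemma in_part_inj z z' w : in_part l s z w -> in_part l s z' w -> z = z'.
Proof.
move=> /andP[lo hi] /andP[lo' hi']; apply: enum_rank_inj; apply: val_inj.
case: (ltngtP (enum_rank z) (enum_rank z')) => // lt_zz'; exfalso.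
  by have := cut_le lt_zz'; lra.
by have := cut_le lt_zz'; lra.
Qed.

Lemma in_part_cover w : l <= w < l + s -> exists z, in_part l s z w.
Proof.
case/andP=> lw wh.
suff: forall k, (k <= #|X|)%N -> w < l + s * cum k -> exists z, in_part l s z w.
  by move=> /(_ #|X| (leqnn _)); apply; rewrite cum_card mulr1.
elim=> [|k IH] le_kX; first by rewrite cum0 mulr0 addr0; lra.
case: (ltP w (l + s * cum k)) => [wk _|kw wk1]; first exact: IH (ltnW le_kX) wk.
exists (enum_val (Ordinal le_kX)).
by rewrite /in_part enum_valK kw.
Qed.

End Partition.
End Cumulative.

Lemma uniform01E (R : realType) (U : set R) : measurable U ->
  uniform_prob (@ltr01 R) U = lebesgue_measure (U `&` `[0, 1[).
Proof.
move=> mU; rewrite /uniform_prob integral_uniform_pdf.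
rewrite (eq_integral (cst 1%:E)); last first.
  by move=> w; rewrite inE /= in_itv /= /uniform_pdf => -[_ ->]; rewrite subr0 invr1.
rewrite integral_cst ?mul1e; last exact: measurableI.
have -> : U `&` `[0, 1] = (U `&` `[0, 1[) `|` (U `&` [set 1]).
  rewrite -setIUr; congr (_ `&` _); apply/seteqP; split=> w /=; rewrite !in_itv /=.
    by case/andP=> ->; rewrite le_eqVlt => /predU1P[|->]; [right|left].
  by case=> [/andP[-> /ltW ->] | ->] //; rewrite ler01 lexx.
apply: measureU0; [exact: measurableI | exact: measurableI |].
by apply: (subset_measure0 _ _ _ (lebesgue_measure_set1 1)) => //; exact: measurableI.
Qed.

Section Sampler.
Variables (R : realType) (X : finType) (x0 : X) (q : seq X -> X -> R).
Hypothesis q_mixed : forall h, is_mixed (q h).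

(* A history [h] is sampled by the points of a cell [[lo, lo + len[] of [[0, 1[]; the
   children [rcons h z] split that cell in proportions [q h z]. *)
Definition extend (c : seq X * R * R) (z : X) : seq X * R * R :=
  let: (h, lo, len) := c in (rcons h z, lo + len * cum (q h) (enum_rank z), len * q h z).

Definition cell (h : seq X) : seq X * R * R := foldl extend ([::], 0, 1) h.
Definition cell_lo (h : seq X) : R := (cell h).1.2.
Definition cell_len (h : seq X) : R := (cell h).2.
Definition in_cell (h : seq X) (w : R) : bool :=
  (cell_lo h <= w) && (w < cell_lo h + cell_len h).

Lemma cell_rcons h z : cell (rcons h z) = extend (cell h) z.
Proof. by rewrite /cell -cats1 foldl_cat. Qed.

Lemma cell_history h : (cell h).1.1 = h.
Proof.
elim/last_ind: h => // h z IH; rewrite cell_rcons /extend.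
by case: (cell h) IH => [[h' lo] len] /= ->.
Qed.

Lemma cell_lo_rcons h z :
  cell_lo (rcons h z) = cell_lo h + cell_len h * cum (q h) (enum_rank z).
Proof.
rewrite /cell_lo /cell_len cell_rcons.
by move: (cell_history h); case: (cell h) => [[h' lo] len] /= ->.
Qed.

Lemma cell_len_rcons h z : cell_len (rcons h z) = cell_len h * q h z.
Proof.
rewrite /cell_len cell_rcons.
by move: (cell_history h); case: (cell h) => [[h' lo] len] /= ->.
Qed.

Lemma cell_len_ge0 h : 0 <= cell_len h.
Proof.
elim/last_ind: h => [|h z IH]; first exact: ler01.
by rewrite cell_len_rcons mulr_ge0 //; exact: (q_mixed h).1.
Qed.

Lemma in_cell_nil w : in_cell [::] w = (0 <= w < 1).
Proof. by rewrite /in_cell /cell_lo /cell_len /= add0r. Qed.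

Lemma in_cell_rcons h z w :
  in_cell (rcons h z) w = in_part (q h) (cell_lo h) (cell_len h) z w.
Proof.
by rewrite /in_cell /in_part cell_lo_rcons cell_len_rcons cumS // mulrDr addrA.
Qed.

Lemma in_cell_parent h z w : in_cell (rcons h z) w -> in_cell h w.
Proof. by rewrite in_cell_rcons => /(in_part_sub (q_mixed h) (cell_len_ge0 h)). Qed.

Lemma in_cell_root h w : in_cell h w -> 0 <= w < 1.
Proof.
rewrite -in_cell_nil; elim/last_ind: h => // h z IH.
by move/in_cell_parent; exact: IH.
Qed.

Definition draw (h : seq X) (w : R) : X :=
  odflt x0 [pick z | in_cell (rcons h z) w].

Fixpoint draws (t : nat) (w : R) : seq X :=
  if t is t'.+1 then rcons (draws t' w) (draw (draws t' w) w) else [::].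

Lemma draw_eq h z w : in_cell (rcons h z) w -> draw h w = z.
Proof.
move=> hzw; rewrite /draw; case: pickP => [z' /= hz'w|/(_ z)]; last by rewrite hzw.
move: hz'w hzw; rewrite !in_cell_rcons; apply: in_part_inj => //.
exact: cell_len_ge0.
Qed.

Lemma draw_support h w : draw h w = x0 \/ 0 < q h (draw h w).
Proof.
rewrite /draw; case: pickP => [z /= hzw|_]; [right|by left].
have [q_ge0 _] := q_mixed h.
rewrite lt_def q_ge0 andbT; apply: contraTneq hzw => qz0.
by rewrite /in_cell cell_len_rcons qz0 mulr0 addr0; case: leP => //= /le_lt_trans->.
Qed.

Lemma size_draws t w : size (draws t w) = t.
Proof. by elim: t => //= t IH; rewrite size_rcons IH. Qed.

Lemma draws_outside t w : ~~ (0 <= w < 1) -> draws t w = nseq t x0.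
Proof.
move=> w01; elim: t => // t IH; rewrite [LHS]/= IH (_ : draw _ w = x0).
  by rewrite -cats1 -[[:: x0]]/(nseq 1 x0) -nseqD addn1.
rewrite /draw; case: pickP => // z /in_cell_root w01'.
by rewrite w01' in w01.
Qed.

Lemma draws_fiber t h w : size h = t -> (draws t w = h /\ 0 <= w < 1) <-> in_cell h w.
Proof.
move=> <-{t}; elim/last_ind: h => [|h z IH]; first by rewrite in_cell_nil; split=> [[]|].
rewrite size_rcons /=; split=> [[/rcons_inj[dh <-] w01]|hzw].
  have hw : in_cell h w by apply/IH.
  have [z' hz'w] : exists z', in_cell (rcons h z') w.
    have [z' hz'w] := in_part_cover (q_mixed h) hw.
    by exists z'; rewrite in_cell_rcons.
  by rewrite dh (draw_eq hz'w).
have [dh w01] := IH.2 (in_cell_parent hzw).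
by split=> //; rewrite dh (draw_eq hzw).
Qed.

Lemma measurable_in_cell h : measurable [set w | in_cell h w].
Proof.
have -> : [set w | in_cell h w] = `[cell_lo h, cell_lo h + cell_len h[%classic.
  by apply/seteqP; split=> w; rewrite /= in_itv.
exact: measurable_itv.
Qed.

Lemma draws_preimage t h : size h = t ->
  [set w | draws t w = h] =
  [set w | in_cell h w] `|` (if h == nseq t x0 then ~` `[0, 1[ else set0).
Proof.
move=> sh; apply/seteqP; split=> w /=.
  case: (boolP (0 <= w < 1)) => w01 dh; first by left; apply/(draws_fiber _ sh).
  by right; rewrite -dh draws_outside // eqxx /= in_itv /=; apply/negP.
case=> [/(draws_fiber _ sh)[] // | ]; case: eqP => // -> /=.
by rewrite in_itv /= => /negP; exact: draws_outside.
Qed.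

Lemma measurable_draws t h : measurable [set w | draws t w = h].
Proof.
have [sh|st] := eqVneq (size h) t; last first.
  rewrite (_ : [set w | _] = set0) //; apply/seteqP; split=> w //= dh.
  by rewrite -dh size_draws eqxx in st.
rewrite draws_preimage //; apply: measurableU; first exact: measurable_in_cell.
by case: ifP => // _; apply: measurableC; exact: measurable_itv.
Qed.

Lemma uniform_draws t h : uniform_prob (@ltr01 R) [set w | draws t w = h] =
  (if size h == t then cell_len h else 0)%:E.
Proof.
rewrite uniform01E; last exact: measurable_draws.
case: eqP => [sh|st]; last first.
  rewrite (_ : [set w | _] = set0) ?set0I ?measure0 //; apply/seteqP; split=> w //= dh.
  by apply: st; rewrite -dh size_draws.
rewrite (_ : _ `&` _ = `[cell_lo h, cell_lo h + cell_len h[%classic).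
  rewrite lebesgue_measure_itv /= lte_fin ltrDl.
  case: ltP => [_|len_le0]; first by rewrite -EFinD addrC addKr.
  by congr EFin; apply/eqP; rewrite eq_le len_le0 cell_len_ge0.
by apply/seteqP; split=> w; rewrite /= !in_itv /= => /(draws_fiber _ sh).
Qed.

End Sampler.

Lemma is_mixed_prod (R : realType) (I J : finType) (p : I -> R) (p' : J -> R) :
  is_mixed p -> is_mixed p' -> is_mixed (fun u : I * J => p u.1 * p' u.2).
Proof.
move=> [p_ge0 p1] [p'_ge0 p'1]; split=> [[i j]|]; first exact: mulr_ge0.
rewrite -(pair_bigA _ (fun i j => p i * p' j)) /= -p1.
by apply: eq_bigr => i _; rewrite -mulr_sumr p'1 mulr1.
Qed.

Lemma measurable_preimage_countType d (T : measurableType d) (H : countType)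
    (f : T -> H) (A : set H) :
  (forall h, measurable [set w | f w = h]) -> measurable (f @^-1` A).
Proof.
move=> mf; have -> : f @^-1` A = \bigcup_(h in A) [set w | f w = h].
  by apply/seteqP; split=> w; [exists (f w) | case=> h Ah /= ->].
rewrite bigcup_mkcond; apply: countable_bigcupT_measurable; first exact: countableP.
by move=> h; case: ifP.
Qed.

Section Realization.
Variables (R : realType) (n : nat) (x : lstrategy R n) (y : ostrategy R n).
Hypotheses (x_mixed : is_lstrategy x) (y_mixed : is_ostrategy y).
Variable ab0 : Aidx n * Bidx n.

Let joint (h : history n) (u : Aidx n * Bidx n) : R := x h u.1 * y h u.2.

Let joint_mixed h : is_mixed (joint h).
Proof. exact: is_mixed_prod. Qed.

Definition sampled_a (t : nat) (w : R) : Aidx n :=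
  (draw ab0 joint (draws ab0 joint t w) w).1.
Definition sampled_b (t : nat) (w : R) : Bidx n :=
  (draw ab0 joint (draws ab0 joint t w) w).2.

Lemma sampled_history t w :
  [seq (sampled_a s w, sampled_b s w) | s <- iota 0 t] = draws ab0 joint t w.
Proof.
elim: t => // t IH; rewrite -addn1 iotaD map_cat cats1 IH.
by rewrite add0n addn1 /sampled_a /sampled_b -surjective_pairing.
Qed.

Lemma sampled_b_support t w :
  sampled_b t w = ab0.2 \/ 0 < y (draws ab0 joint t w) (sampled_b t w).
Proof.
rewrite /sampled_b; case: (draw_support ab0 joint_mixed (draws ab0 joint t w) w).
  by move=> ->; left.
move=> xy_gt0; right; have [y_ge0 _] := y_mixed (draws ab0 joint t w).
rewrite lt_def y_ge0 andbT; apply: contraTneq xy_gt0 => y0.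
by rewrite /joint y0 mulr0 ltxx.
Qed.

Lemma realizes_sampled : realizes (uniform_prob (@ltr01 R)) x y sampled_a sampled_b.
Proof.
split; [|split].
- move=> t i.
  rewrite (_ : [set w | _] = draws ab0 joint t.+1 @^-1` [set h | (last ab0 h).1 = i]).
    by apply: measurable_preimage_countType => h; exact: measurable_draws.
  by apply/seteqP; split=> w /=; rewrite last_rcons.
- move=> t j.
  rewrite (_ : [set w | _] = draws ab0 joint t.+1 @^-1` [set h | (last ab0 h).2 = j]).
    by apply: measurable_preimage_countType => h; exact: measurable_draws.
  by apply/seteqP; split=> w /=; rewrite last_rcons.
move=> t h i j /=.
rewrite (_ : [set w | _ /\ _] = [set w | draws ab0 joint t.+1 w = rcons h (i, j)]); last first.
  apply/seteqP; split=> w /=; rewrite /hist sampled_history //.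
    by case=> <- [<- <-]; rewrite /sampled_a /sampled_b -surjective_pairing.
  by case/rcons_inj => dh; rewrite /sampled_a /sampled_b => ->.
rewrite (_ : [set w | _ = h] = [set w | draws ab0 joint t w = h]); last first.
  by apply/seteqP; split=> w /=; rewrite /hist sampled_history.
rewrite !uniform_draws // size_rcons eqSS cell_len_rcons.
by case: eqP => _; rewrite -EFinM // mul0r.
Qed.

End Realization.

Section Regret.
Variables (R : realType) (n : nat) (alpha : R).
Hypothesis alpha_ge0 : 0 <= alpha.

Lemma Aval_max : Aval R (ord_max : 'I_n.+2) = 1.
Proof. by rewrite /Aval divff // pnatr_eq0. Qed.

Lemma Bval_max : Bval R (ord_max : 'I_n.+1) = 1.
Proof. by rewrite /Bval divff // pnatr_eq0. Qed.

Lemma Aval_ge1 (i : 'I_n.+2) : (1 <= Aval R i) = (i == ord_max).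
Proof.
rewrite /Aval ler_pdivlMr ?ltr0n // mul1r ler_nat -(inj_eq val_inj) /=.
by rewrite eqn_leq leq_ord.
Qed.

Lemma Aval_le (i : 'I_n.+2) : i != ord_max -> Aval R i <= 1 - (n.+1)%:R^-1.
Proof.
rewrite -Aval_ge1 -ltNge /Aval ltr_pdivrMr ?ltr0n // mul1r ltr_nat ltnS => le_in.
rewrite (_ : 1 - _ = n%:R / (n.+1)%:R); last by rewrite -natr1; field; rewrite natr1 pnatr_eq0.
by rewrite ler_pM2r ?invr_gt0 ?ltr0n // ler_nat.
Qed.

Lemma mreg_max_None (i : 'I_n.+2) : mreg alpha i ord_max None = (i == ord_max)%:R.
Proof. by rewrite /mreg Bval_max Aval_ge1. Qed.

Lemma mreg_max_Some (i : 'I_n.+2) :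
  alpha / (n.+1)%:R * (1 - (i == ord_max)%:R) <= mreg alpha i ord_max (Some ord_max).
Proof.
rewrite /mreg Bval_max Aval_max /ell lexx subrr mulr0 subr0.
have [->|ni] := eqVneq i ord_max; first by rewrite Aval_max subrr !mulr0.
rewrite subr0 mulr1 Aval_ge1 (negbTE ni) subr0 ler_wpM2l //.
by rewrite lerBrDr addrC -lerBrDr; exact: Aval_le.
Qed.

Lemma eucl_norm_ge (v : vec R n) k : `|v k| <= eucl_norm v.
Proof.
rewrite /eucl_norm -sqrtr_sqr ler_wsqrtr // (bigD1 k) //= lerDl.
by apply: sumr_ge0 => l _; exact: sqr_ge0.
Qed.

(* Being within [c] of [Sreg] would force [v None <= alpha + c] and [v (Some a') <= c]. *)
Lemma dist_Sreg_ge (v : vec R n) (a' : Aidx n) (beta : R) : 0 <= beta ->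
  beta * (1 - v None) <= v (Some a') ->
  beta * (1 - alpha) / (1 + beta) <= dist v (Sreg alpha).
Proof.
move=> beta_ge0 v_ge; set c := _ / _.
have c_eq : c + beta * c = beta * (1 - alpha) by rewrite /c; field; lra.
apply: lb_le_inf.
  by exists (eucl_norm (fun k => v k - 0)), (fun _ => 0); do !split => //; rewrite lexx.
move=> _ [s [[/andP[_ s_le] s_le0] ->]].
have := eucl_norm_ge (fun k => v k - s k) None.
have := eucl_norm_ge (fun k => v k - s k) (Some a').
move: (s_le0 a'); set e := eucl_norm _ => sa' eS eN.
have := ler_norm (v None - s None); have := ler_norm (v (Some a') - s (Some a')).
case: (leP c (v None - s None)) => [|lt_c]; first lra.
have : beta * (v None - s None) <= beta * c by rewrite ler_wpM2l // ltW.
nra.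
Qed.

Lemma avg_regret_ge d (T : measurableType d) (a : nat -> T -> Aidx n)
    (b : nat -> T -> Bidx n) N w :
  (forall t, b t w = ord_max) ->
  alpha / (n.+1)%:R * (1 - avg_payoff (mreg alpha) a b N w None)
    <= avg_payoff (mreg alpha) a b N w (Some ord_max).
Proof.
move=> b_max; rewrite /avg_payoff.
under eq_bigr do rewrite b_max mreg_max_None.
apply: le_trans (_ : _ <= (N.+1)%:R^-1 *
  \sum_(t < N.+1) (alpha / (n.+1)%:R * (1 - (a t w == ord_max)%:R))) _.
  rewrite -mulr_sumr sumrB sumr_const card_ord le_eqVlt; apply/orP; left; apply/eqP.
  by field; rewrite !(addrC 1) !natr1 !pnatr_eq0.
rewrite ler_wpM2l ?invr_ge0 ?ler0n //; apply: ler_sum => t _.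
by rewrite b_max; exact: mreg_max_Some.
Qed.

End Regret.

Lemma not_ae_cvg0 (R : realType) d (T : measurableType d) (P : probability T R)
    (f : T -> nat -> R) (c : R) :
  0 < c -> (forall w N, c <= f w N) -> ~ {ae P, forall w, f w @ \oo --> 0}.
Proof.
move=> c_gt0 f_ge f_cvg.
have : ProperFilter (almost_everywhere P).
  by apply: ae_properfilter_algebraOfSetsType; rewrite [X in (0 < X)%E]probability_setT lte01.
move=> PF; have [w /cvgr_dist_lt/(_ c c_gt0)/filter_ex[N]] := filter_ex f_cvg.
by rewrite sub0r normrN => /(le_lt_trans (ler_norm _)); rewrite ltNge f_ge.
Qed.

Definition pure_ostrategy (R : realType) (n : nat) (j : Bidx n) : ostrategy R n :=
  fun _ j' => (j' == j)%:R.

Lemma is_ostrategy_pure (R : realType) (n : nat) (j : Bidx n) :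
  is_ostrategy (pure_ostrategy R j).
Proof.
move=> h; split=> [j'|]; first exact: ler0n.
by rewrite /pure_ostrategy (bigD1 j) //= eqxx big1 ?addr0 // => j' /negbTE->.
Qed.

Theorem theorem4 (R : realType) (n : nat) (alpha : R) :
  (0 < n)%N -> 0 < alpha < 1 ->
  ~ approachable (@mreg R n alpha) (@Sreg R n alpha).
Proof.
move=> _ /andP[alpha_gt0 alpha_lt1] [x [x_mixed approach]].
pose y := pure_ostrategy R (ord_max : Bidx n).
have y_mixed : is_ostrategy y := is_ostrategy_pure R ord_max.
pose ab0 : Aidx n * Bidx n := (ord0, ord_max).
have b_max t w : sampled_b x y ab0 t w = ord_max.
  case: (sampled_b_support x_mixed y_mixed ab0 t w) => //.
  by rewrite /y /pure_ostrategy; case: eqP; rewrite ?ltxx.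
pose beta := alpha / (n.+1)%:R.
have beta_gt0 : 0 < beta by rewrite divr_gt0 ?ltr0n.
have c_gt0 : 0 < beta * (1 - alpha) / (1 + beta).
  by rewrite !divr_gt0 ?mulr_gt0 ?subr_gt0 ?addr_gt0.
have := approach y y_mixed _ _ _ _ _ (realizes_sampled x_mixed y_mixed ab0).
apply: (not_ae_cvg0 c_gt0).
move=> w N; apply: (dist_Sreg_ge (ltW alpha_gt0) (ltW beta_gt0)).
exact: (avg_regret_ge (ltW alpha_gt0) _ _ (b_max^~ w)).
Qed.
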